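(* In coordinates $(t,r,\theta,\phi)$ take the coframe $\mathbf h^1=A_1(t,r)dt$, $\mathbf h^2=A_2(t,r)dr$, $\mathbf h^3=A_3(t,r)d\theta$, $\mathbf h^4=A_3(t,r)\sin\theta\,d\phi$ and a metric-compatible connection whose only non-zero components (up to $\omega_{abc}=-\omega_{bac}$) are $\omega_{341}=W_1$, $\omega_{342}=W_2$, $\omega_{233}=\omega_{244}=W_3$, $\omega_{234}=-\omega_{243}=W_4$, $\omega_{121}=W_5$, $\omega_{122}=W_6$, $\omega_{133}=\omega_{144}=W_7$, $\omega_{134}=-\omega_{143}=W_8$, $\omega_{344}=-\frac{\cos\theta}{A_3\sin\theta}$, with $W_i=W_i(t,r)$ (the most general spherically symmetric Riemann-Cartan connection). Then this connection has vanishing curvature (so the geometry is a spherically symmetric teleparallel geometry) if and only if there exist functions $\chi(t,r)$ and $\psi(t,r)$ such that $$W_1=-\frac{\partial_t\chi}{A_1},\; W_2=-\frac{\partial_r\chi}{A_2},\; W_3=\frac{\cosh\psi\cos\chi}{A_3},\; W_4=\frac{\cosh\psi\sin\chi}{A_3},$$ $$W_5=-\frac{\partial_t\psi}{A_1},\; W_6=-\frac{\partial_r\psi}{A_2},\; W_7=\frac{\sinh\psi\cos\chi}{A_3},\; W_8=\frac{\sinh\psi\sin\chi}{A_3}.$$ In particular every spherically symmetric teleparallel geometry is specified by the five functions $A_1,A_2,A_3,\chi,\psi$ of $(t,r)$.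
   Context: Frame indices in $\{1,2,3,4\}$, $\eta=\mathrm{diag}(-1,1,1,1)$, $\omega_{abc}=\eta_{ad}\omega^d{}_{bc}$, connection one-form $\boldsymbol\omega^a{}_b=\omega^a{}_{bc}\mathbf h^c$, dual frame $\mathbf h_a=h_a{}^\mu\partial_\mu$. Curvature: $R^a{}_{bcd}=h_c{}^\mu\partial_\mu\omega^a{}_{bd}-h_d{}^\nu\partial_\nu\omega^a{}_{bc}+\omega^a{}_{fc}\omega^f{}_{bd}-\omega^a{}_{fd}\omega^f{}_{bc}$. A teleparallel geometry is one with $R^a{}_{bcd}=0$ for a metric-compatible connection. *)

From Stdlib Require Import Reals List.
From Coquelicot Require Import Coquelicot.
Import ListNotations.
Open Scope R_scope.

(* iterated partial derivatives: true = d/dt, false = d/dr (innermost applied last in list) *)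
Fixpoint iterD (l : list bool) (f : R -> R -> R) : R -> R -> R :=
  match l with
  | nil => f
  | b :: l' =>
      let g := iterD l' f in
      if b then (fun t r => Derive (fun s => g s r) t)
           else (fun t r => Derive (fun s => g t s) r)
  end.

Definition smooth2 (f : R -> R -> R) : Prop :=
  forall l : list bool, forall t r : R,
    ex_derive (fun s => iterD l f s r) t /\
    ex_derive (fun s => iterD l f t s) r /\
    continuous (fun p : R * R => iterD l f (fst p) (snd p)) (t, r).

Definition dt (f : R -> R -> R) (t r : R) : R := Derive (fun s => f s r) t.
Definition dr (f : R -> R -> R) (t r : R) : R := Derive (fun s => f t s) r.

(* ---------- 4d fields; coordinates x^1=t, x^2=r, x^3=theta, x^4=phi ---------- *)
Definition fld := R -> R -> R -> R -> R.

Definition pd (mu : nat) (f : fld) : fld := fun t r th ph =>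
  match mu with
  | 1%nat => Derive (fun s => f s r th ph) t
  | 2%nat => Derive (fun s => f t s th ph) r
  | 3%nat => Derive (fun s => f t r s ph) th
  | _ => Derive (fun s => f t r th s) ph
  end.

Definition idx : list nat := [1%nat; 2%nat; 3%nat; 4%nat].
Definition sum4 (F : nat -> R) : R := fold_right Rplus 0 (map F idx).

(* Minkowski metric eta = diag(-1,1,1,1) (its own inverse) *)
Definition eta (a : nat) : R := match a with 1%nat => -1 | _ => 1 end.

Section Geometry.
Variables (A1 A2 A3 : R -> R -> R).

Definition cof (a mu : nat) : fld := fun t r th ph =>
  match a, mu with
  | 1%nat, 1%nat => A1 t r
  | 2%nat, 2%nat => A2 t r
  | 3%nat, 3%nat => A3 t r
  | 4%nat, 4%nat => A3 t r * sin th
  | _, _ => 0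
  end.

Definition fr (a mu : nat) : fld := fun t r th ph =>
  match a, mu with
  | 1%nat, 1%nat => / A1 t r
  | 2%nat, 2%nat => / A2 t r
  | 3%nat, 3%nat => / A3 t r
  | 4%nat, 4%nat => / (A3 t r * sin th)
  | _, _ => 0
  end.

Variables (W1 W2 W3 W4 W5 W6 W7 W8 : R -> R -> R).

Definition omL (a b c : nat) : fld := fun t r th ph =>
  match a, b, c with
  | 3%nat, 4%nat, 1%nat => W1 t r
  | 4%nat, 3%nat, 1%nat => - W1 t r
  | 3%nat, 4%nat, 2%nat => W2 t r
  | 4%nat, 3%nat, 2%nat => - W2 t r
  | 2%nat, 3%nat, 3%nat => W3 t r
  | 3%nat, 2%nat, 3%nat => - W3 t r
  | 2%nat, 4%nat, 4%nat => W3 t r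
  | 4%nat, 2%nat, 4%nat => - W3 t r
  | 2%nat, 3%nat, 4%nat => W4 t r
  | 3%nat, 2%nat, 4%nat => - W4 t r
  | 2%nat, 4%nat, 3%nat => - W4 t r
  | 4%nat, 2%nat, 3%nat => W4 t r
  | 1%nat, 2%nat, 1%nat => W5 t r
  | 2%nat, 1%nat, 1%nat => - W5 t r
  | 1%nat, 2%nat, 2%nat => W6 t r
  | 2%nat, 1%nat, 2%nat => - W6 t r
  | 1%nat, 3%nat, 3%nat => W7 t r
  | 3%nat, 1%nat, 3%nat => - W7 t r
  | 1%nat, 4%nat, 4%nat => W7 t r
  | 4%nat, 1%nat, 4%nat => - W7 t r
  | 1%nat, 3%nat, 4%nat => W8 t r
  | 3%nat, 1%nat, 4%nat => - W8 t r
  | 1%nat, 4%nat, 3%nat => - W8 t r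
  | 4%nat, 1%nat, 3%nat => W8 t r
  | 3%nat, 4%nat, 4%nat => - cos th / (A3 t r * sin th)
  | 4%nat, 3%nat, 4%nat => cos th / (A3 t r * sin th)
  | _, _, _ => 0
  end.

(* omega^a_{bc} = eta^{ad} omega_{dbc} *)
Definition omU (a b c : nat) : fld := fun t r th ph => eta a * omL a b c t r th ph.

(* connection one-form omega^a_b = omega^a_{bc} h^c, coordinate components *)
Definition om1 (a b mu : nat) : fld := fun t r th ph =>
  sum4 (fun c => omU a b c t r th ph * cof c mu t r th ph).

(* curvature two-form R^a_b = d omega^a_b + omega^a_f /\ omega^f_b, coordinate comps *)
Definition curvC (a b mu nu : nat) : fld := fun t r th ph =>
  pd mu (om1 a b nu) t r th ph - pd nu (om1 a b mu) t r th ph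
  + sum4 (fun f => om1 a f mu t r th ph * om1 f b nu t r th ph
                 - om1 a f nu t r th ph * om1 f b mu t r th ph).

Definition curv (a b c d : nat) : fld := fun t r th ph =>
  sum4 (fun mu => sum4 (fun nu =>
    fr c mu t r th ph * fr d nu t r th ph * curvC a b mu nu t r th ph)).

Definition flat : Prop :=
  forall a b c d : nat, In a idx -> In b idx -> In c idx -> In d idx ->
  forall t r th ph : R, 0 < th < PI -> curv a b c d t r th ph = 0.

End Geometry.

From Stdlib Require Import Reals List Lra Lia FunctionalExtensionality.
From Coquelicot Require Import Coquelicot.
Import ListNotations.
Open Scope R_scope.

(* The curvature of the given connection vanishes iff W1, ..., W8 satisfy a
   system of structure equations ([structure_eqs]): the one-forms
   A1 W1 dt + A2 W2 dr and A1 W5 dt + A2 W6 dr are closed, the vector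
   A3 (W3, W4, W7, W8) is transported along t and r by an infinitesimal
   rotation (generated by W1, W2) and boost (generated by W5, W6), and it lies
   on the unit hyperboloid u^2 + v^2 - p^2 - q^2 = 1 with (p, q) parallel to
   (u, v).  This is a finite computation of curvature components.
   Given the structure equations, the two closed forms are -d chi and -d psi
   for smooth potentials (Poincare lemma on R^2); the transport equations then
   say that A3 (W3, W4, W7, W8), rotated back by chi and boosted back by psi,
   is constant, and choosing chi, psi at the origin from the Lorentz-polar
   decomposition of its initial value makes this constant (1, 0, 0, 0), which
   is the claimed parametrization.  Conversely, the parametrized connection
   satisfies the structure equations by differentiation and symmetry of mixed
   partials. *)

Lemma iterD_snoc (l : list bool) (b : bool) (f : R -> R -> R) :
  iterD (l ++ [b]) f = iterD l (iterD [b] f).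
Proof. induction l as [|x l IH]; simpl; [reflexivity | now rewrite IH]. Qed.

Lemma iterD_ext (l : list bool) (f g : R -> R -> R) :
  (forall t r, f t r = g t r) -> forall t r, iterD l f t r = iterD l g t r.
Proof.
  intros E; induction l as [|[|] l IH]; intros t r; simpl; [apply E | |];
    apply Derive_ext; intros; apply IH.
Qed.

Definition smooth_upto (n : nat) (f : R -> R -> R) : Prop :=
  forall l : list bool, (length l <= n)%nat -> forall t r : R,
    ex_derive (fun s => iterD l f s r) t /\
    ex_derive (fun s => iterD l f t s) r /\
    continuous (fun p : R * R => iterD l f (fst p) (snd p)) (t, r).

Lemma smooth2_iff (f : R -> R -> R) : smooth2 f <-> forall n, smooth_upto n f.
Proof.
  split; [intros H n l _; apply H | intros H l; apply (H (length l) l (le_n _))].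
Qed.

Lemma smooth_upto_0 (f : R -> R -> R) :
  smooth_upto 0 f <-> forall t r,
    ex_derive (fun s => f s r) t /\ ex_derive (fun s => f t s) r /\
    continuous (fun p : R * R => f (fst p) (snd p)) (t, r).
Proof.
  split; [intros H; apply (H nil (le_n _)) |].
  intros H [|b l] Hl; [apply H | simpl in Hl; lia].
Qed.

Lemma smooth_upto_ext (n : nat) (f g : R -> R -> R) :
  (forall t r, f t r = g t r) -> smooth_upto n f -> smooth_upto n g.
Proof.
  intros E H l Hl t r; destruct (H l Hl t r) as (H1 & H2 & H3); repeat split.
  - eapply ex_derive_ext; [|exact H1]; intros; simpl; apply iterD_ext; auto.
  - eapply ex_derive_ext; [|exact H2]; intros; simpl; apply iterD_ext; auto.
  - eapply continuous_ext; [|exact H3]; intros; simpl; apply iterD_ext; auto.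
Qed.

Lemma smooth_upto_le (m n : nat) (f : R -> R -> R) :
  (m <= n)%nat -> smooth_upto n f -> smooth_upto m f.
Proof. intros Hle H l Hl; apply H; lia. Qed.

Lemma smooth_upto_S (n : nat) (f : R -> R -> R) :
  smooth_upto (S n) f <->
  smooth_upto 0 f /\ smooth_upto n (dt f) /\ smooth_upto n (dr f).
Proof.
  split.
  - intros H; split; [apply (smooth_upto_le 0 (S n)); [lia | exact H] |].
    split; intros l Hl t r;
      [change (dt f) with (iterD [true] f) | change (dr f) with (iterD [false] f)];
      rewrite <- iterD_snoc; apply H; rewrite length_app; simpl; lia.
  - intros (H0 & Ht & Hr) l Hl t r.
    destruct l as [|[|] l _] using rev_ind; [now apply H0 | |];
      rewrite length_app in Hl; simpl in Hl; rewrite iterD_snoc;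
      [apply Ht | apply Hr]; lia.
Qed.

Lemma smooth_upto_0_plus (f g : R -> R -> R) :
  smooth_upto 0 f -> smooth_upto 0 g -> smooth_upto 0 (fun t r => f t r + g t r).
Proof.
  rewrite !smooth_upto_0; intros Hf Hg t r.
  destruct (Hf t r) as (f1 & f2 & f3), (Hg t r) as (g1 & g2 & g3); repeat split.
  - apply (ex_derive_plus (fun s => f s r) (fun s => g s r)); auto.
  - apply (ex_derive_plus (fun s => f t s) (fun s => g t s)); auto.
  - apply (continuous_plus (fun p : R * R => f (fst p) (snd p))
                           (fun p : R * R => g (fst p) (snd p))); auto.
Qed.

Lemma smooth_upto_0_mult (f g : R -> R -> R) :
  smooth_upto 0 f -> smooth_upto 0 g -> smooth_upto 0 (fun t r => f t r * g t r).
Proof.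
  rewrite !smooth_upto_0; intros Hf Hg t r.
  destruct (Hf t r) as (f1 & f2 & f3), (Hg t r) as (g1 & g2 & g3); repeat split.
  - apply (ex_derive_mult (fun s => f s r) (fun s => g s r)); auto.
  - apply (ex_derive_mult (fun s => f t s) (fun s => g t s)); auto.
  - apply (continuous_mult (fun p : R * R => f (fst p) (snd p))
                           (fun p : R * R => g (fst p) (snd p))); auto.
Qed.

Lemma smooth_upto_plus (n : nat) : forall f g : R -> R -> R,
  smooth_upto n f -> smooth_upto n g -> smooth_upto n (fun t r => f t r + g t r).
Proof.
  induction n as [|n IH]; intros f g Hf Hg; [now apply smooth_upto_0_plus |].
  rewrite smooth_upto_S in *.
  destruct Hf as (f0 & ft & fr), Hg as (g0 & gt & gr).
  assert (Hf0 := proj1 (smooth_upto_0 f) f0); assert (Hg0 := proj1 (smooth_upto_0 g) g0).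
  split; [|split].
  - now apply smooth_upto_0_plus.
  - apply smooth_upto_ext with (fun t r => dt f t r + dt g t r); [|now apply IH].
    intros t r; unfold dt; symmetry; apply Derive_plus;
      [apply (proj1 (Hf0 t r)) | apply (proj1 (Hg0 t r))].
  - apply smooth_upto_ext with (fun t r => dr f t r + dr g t r); [|now apply IH].
    intros t r; unfold dr; symmetry; apply Derive_plus;
      [apply (proj1 (proj2 (Hf0 t r))) | apply (proj1 (proj2 (Hg0 t r)))].
Qed.

Lemma smooth_upto_mult (n : nat) : forall f g : R -> R -> R,
  smooth_upto n f -> smooth_upto n g -> smooth_upto n (fun t r => f t r * g t r).
Proof.
  induction n as [|n IH]; intros f g Hf Hg; [now apply smooth_upto_0_mult |].
  assert (Hfn := smooth_upto_le n (S n) f ltac:(lia) Hf).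
  assert (Hgn := smooth_upto_le n (S n) g ltac:(lia) Hg).
  rewrite smooth_upto_S in *.
  destruct Hf as (f0 & ft & fr), Hg as (g0 & gt & gr).
  assert (Hf0 := proj1 (smooth_upto_0 f) f0); assert (Hg0 := proj1 (smooth_upto_0 g) g0).
  split; [|split].
  - now apply smooth_upto_0_mult.
  - apply smooth_upto_ext with (fun t r => dt f t r * g t r + f t r * dt g t r).
    + intros t r; unfold dt; rewrite Derive_mult;
        [reflexivity | apply (proj1 (Hf0 t r)) | apply (proj1 (Hg0 t r))].
    + apply smooth_upto_plus; apply IH; auto.
  - apply smooth_upto_ext with (fun t r => dr f t r * g t r + f t r * dr g t r).
    + intros t r; unfold dr; rewrite Derive_mult;
        [reflexivity | apply (proj1 (proj2 (Hf0 t r))) | apply (proj1 (proj2 (Hg0 t r)))].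
    + apply smooth_upto_plus; apply IH; auto.
Qed.

Lemma smooth_upto_const (n : nat) : forall c : R, smooth_upto n (fun _ _ => c).
Proof.
  induction n as [|n IH]; intros c.
  - apply smooth_upto_0; intros; repeat split;
      [apply ex_derive_const | apply ex_derive_const | apply continuous_const].
  - apply smooth_upto_S; split; [|split].
    + apply (smooth_upto_le 0 n); [lia | apply IH].
    + apply smooth_upto_ext with (fun _ _ => 0); [|apply IH].
      intros; unfold dt, dr; symmetry; apply Derive_const.
    + apply smooth_upto_ext with (fun _ _ => 0); [|apply IH].
      intros; unfold dt, dr; symmetry; apply Derive_const.
Qed.

Lemma smooth2_ext (f g : R -> R -> R) :
  (forall t r, f t r = g t r) -> smooth2 f -> smooth2 g.
Proof. rewrite !smooth2_iff; intros E H n; apply (smooth_upto_ext n f g E (H n)). Qed.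

Lemma smooth2_mult (f g : R -> R -> R) :
  smooth2 f -> smooth2 g -> smooth2 (fun t r => f t r * g t r).
Proof. rewrite !smooth2_iff; intros Hf Hg n; apply smooth_upto_mult; auto. Qed.

Lemma smooth2_opp (f : R -> R -> R) : smooth2 f -> smooth2 (fun t r => - f t r).
Proof.
  intros H; apply smooth2_ext with (fun t r => -1 * f t r); [intros; ring |].
  apply smooth2_mult; [rewrite smooth2_iff; intros; apply smooth_upto_const | exact H].
Qed.

Lemma smooth2_dt (f : R -> R -> R) : smooth2 f -> smooth2 (dt f).
Proof. rewrite !smooth2_iff; intros H n; apply (proj1 (smooth_upto_S n f) (H (S n))). Qed.

Lemma smooth2_dr (f : R -> R -> R) : smooth2 f -> smooth2 (dr f).
Proof. rewrite !smooth2_iff; intros H n; apply (proj1 (smooth_upto_S n f) (H (S n))). Qed.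

Lemma smooth2_ex_dt (f : R -> R -> R) (t r : R) :
  smooth2 f -> ex_derive (fun s => f s r) t.
Proof. intros H; exact (proj1 (H nil t r)). Qed.

Lemma smooth2_ex_dr (f : R -> R -> R) (t r : R) :
  smooth2 f -> ex_derive (fun s => f t s) r.
Proof. intros H; exact (proj1 (proj2 (H nil t r))). Qed.

Lemma smooth2_continuous (l : list bool) (f : R -> R -> R) (t r : R) :
  smooth2 f -> continuity_2d_pt (iterD l f) t r.
Proof. intros H; apply continuity_2d_pt_filterlim, (H l t r). Qed.

Lemma smooth2_schwarz (f : R -> R -> R) (t r : R) :
  smooth2 f -> dr (dt f) t r = dt (dr f) t r.
Proof.
  intros H; unfold dt, dr; symmetry; apply Schwarz.
  - exists (mkposreal 1 Rlt_0_1); intros u v _ _.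
    repeat split; [apply (H nil u v) | apply (H nil u v) | apply (H [false] u v)
                  | apply (H [true] u v)].
  - apply (smooth2_continuous [true; false] f t r H).
  - apply (smooth2_continuous [false; true] f t r H).
Qed.

Lemma smooth2_continuous_t (f : R -> R -> R) (t r : R) :
  smooth2 f -> continuous (fun s => f s r) t.
Proof.
  intros H; apply (continuous_comp_2 (fun s : R => s) (fun _ : R => r) f);
    [apply continuous_id | apply continuous_const | exact (proj2 (proj2 (H nil t r)))].
Qed.

Lemma smooth2_continuous_r (f : R -> R -> R) (t r : R) :
  smooth2 f -> continuous (fun s => f t s) r.
Proof.
  intros H; apply (continuous_comp_2 (fun _ : R => t) (fun s : R => s) f);
    [apply continuous_const | apply continuous_id | exact (proj2 (proj2 (H nil t r)))].
Qed.

Lemma continuity_2d_of_partial (F g : R -> R -> R) (t r : R) :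
  (forall u v, is_derive (fun s => F u s) v (g u v)) ->
  continuity_2d_pt g t r ->
  continuity_pt (fun s => F s r) t ->
  continuity_2d_pt F t r.
Proof.
  intros HF Hg Ht eps.
  destruct (Hg (mkposreal 1 Rlt_0_1)) as [d1 Hd1]; simpl in Hd1.
  assert (He2 : 0 < eps / 2) by (destruct eps; simpl; lra).
  destruct (proj1 (continuity_pt_locally _ _) Ht (mkposreal _ He2)) as [d2 Hd2];
    simpl in Hd2.
  set (M := Rabs (g t r) + 1).
  assert (HM : 0 < M) by (unfold M; assert (H := Rabs_pos (g t r)); lra).
  assert (HeM : 0 < eps / (2 * M)) by (destruct eps; simpl; apply Rdiv_lt_0_compat; lra).
  assert (Hd : 0 < Rmin d1 (Rmin d2 (eps / (2 * M)))).
  { destruct d1, d2; simpl; repeat apply Rmin_pos; lra. }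
  exists (mkposreal _ Hd); simpl; intros u v Hu Hv.
  apply Rmin_Rgt in Hu as [Hu1 Hu]; apply Rmin_Rgt in Hu as [Hu2 _].
  apply Rmin_Rgt in Hv as [Hv1 Hv]; apply Rmin_Rgt in Hv as [_ Hv3].
  (* along the r-direction F moves at speed at most M near (t, r) *)
  assert (Hr : Rabs (F u v - F u r) <= M * Rabs (v - r)).
  { apply (bounded_variation (fun s => F u s) (g u)); intros c Hc; split; [apply HF|].
    assert (H := Hd1 u c Hu1 ltac:(lra)).
    assert (H2 := Rabs_triang_inv (g u c) (g t r)); unfold M; lra. }
  assert (Hr' : M * Rabs (v - r) < eps / 2).
  { replace (eps / 2) with (M * (eps / (2 * M))) by (field; lra).
    apply Rmult_lt_compat_l; lra. }
  assert (Htr := Hd2 u Hu2).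
  replace (F u v - F t r) with ((F u v - F u r) + (F u r - F t r)) by ring.
  eapply Rle_lt_trans; [apply Rabs_triang | lra].
Qed.

Lemma smooth2_of_partials (F ft fr : R -> R -> R) :
  smooth2 ft -> smooth2 fr ->
  (forall t r, is_derive (fun s => F s r) t (ft t r) /\
               is_derive (fun s => F t s) r (fr t r)) ->
  smooth2 F.
Proof.
  intros Ht Hr DF.
  assert (F0 : smooth_upto 0 F).
  { apply smooth_upto_0; intros t r; split; [|split].
    - exists (ft t r); apply (proj1 (DF t r)).
    - exists (fr t r); apply (proj2 (DF t r)).
    - apply continuity_2d_pt_filterlim, (continuity_2d_of_partial F fr t r).
      + intros u v; apply (proj2 (DF u v)).
      + apply (smooth2_continuous nil fr t r Hr).
      + apply continuity_pt_filterlim, (ex_derive_continuous (fun s => F s r)).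
        exists (ft t r); apply (proj1 (DF t r)). }
  apply smooth2_iff; intros [|n]; [exact F0|].
  apply smooth_upto_S; split; [exact F0 | split].
  - apply smooth_upto_ext with ft; [|now apply smooth2_iff].
    intros t r; symmetry; apply is_derive_unique, (proj1 (DF t r)).
  - apply smooth_upto_ext with fr; [|now apply smooth2_iff].
    intros t r; symmetry; apply is_derive_unique, (proj2 (DF t r)).
Qed.

Lemma is_derive_primitive (g : R -> R) (x : R) :
  (forall y, continuous g y) -> is_derive (fun b => RInt g 0 b) x (g x).
Proof.
  intros Hg; apply (is_derive_RInt g (fun b => RInt g 0 b) 0); [|apply Hg].
  apply filter_forall; intros b.
  apply (@RInt_correct R_CompleteNormedModule), ex_RInt_continuous; intros; apply Hg.
Qed.

Lemma is_derive_RInt_t (f : R -> R -> R) (t r : R) :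
  smooth2 f ->
  is_derive (fun x => RInt (fun s => f x s) 0 r) t (RInt (fun s => dt f t s) 0 r).
Proof.
  intros H; apply (is_derive_RInt_param f 0 r t).
  - apply filter_forall; intros x u _; exact (smooth2_ex_dt f x u H).
  - intros u _; apply (smooth2_continuous [true] f t u H).
  - apply filter_forall; intros y.
    apply (@ex_RInt_continuous R_CompleteNormedModule); intros.
    now apply smooth2_continuous_r.
Qed.

Lemma poincare_lemma (ft fr : R -> R -> R) (c0 : R) :
  smooth2 ft -> smooth2 fr -> (forall t r, dr ft t r = dt fr t r) ->
  exists F, smooth2 F /\ F 0 0 = c0 /\ forall t r,
    is_derive (fun s => F s r) t (ft t r) /\ is_derive (fun s => F t s) r (fr t r).
Proof.
  intros Ht Hr Hclosed.
  set (F := fun t r => c0 + RInt (fun s => ft s 0) 0 t + RInt (fun s => fr t s) 0 r).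
  assert (DF : forall t r, is_derive (fun s => F s r) t (ft t r) /\
                           is_derive (fun s => F t s) r (fr t r)).
  { intros t r; split.
    - (* the r-integral of dt fr = dr ft telescopes to ft t r - ft t 0 *)
      assert (HI : RInt (fun s => dt fr t s) 0 r = ft t r - ft t 0).
      { rewrite <- (RInt_ext (fun s => dr ft t s)) by (intros; apply Hclosed).
        apply (RInt_Derive (fun z => ft t z)); intros x _;
          [apply (smooth2_ex_dr ft t x Ht)
          | exact (smooth2_continuous_r (dr ft) t x (smooth2_dr ft Ht))]. }
      replace (ft t r) with (0 + ft t 0 + (ft t r - ft t 0)) by ring.
      apply (is_derive_plus (fun s => c0 + RInt (fun s0 => ft s0 0) 0 s)
                            (fun s => RInt (fun s0 => fr s s0) 0 r));
        [apply (is_derive_plus (fun _ => c0) (fun s => RInt (fun s0 => ft s0 0) 0 s)) |].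
      + apply (@is_derive_const R_AbsRing R_NormedModule).
      + apply (is_derive_primitive (fun s => ft s 0)); intros y.
        exact (smooth2_continuous_t ft y 0 Ht).
      + rewrite <- HI; now apply is_derive_RInt_t.
    - replace (fr t r) with (0 + fr t r) by ring.
      apply (is_derive_plus (fun _ => c0 + RInt (fun s0 => ft s0 0) 0 t)
                            (fun s => RInt (fun s0 => fr t s0) 0 s)).
      + apply (@is_derive_const R_AbsRing R_NormedModule).
      + apply (is_derive_primitive (fun s => fr t s)); intros y.
        exact (smooth2_continuous_r fr t y Hr). }
  exists F; split; [now apply (smooth2_of_partials F ft fr) | split; [|exact DF]].
  unfold F; rewrite !RInt_point; unfold zero; simpl; ring.
Qed.

Lemma derive_zero_const (f : R -> R) (a b : R) : (forall x, is_derive f x 0) -> f a = f b.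
Proof.
  intros H; destruct (Rtotal_order a b) as [Hab | [-> | Hab]];
    [| reflexivity | symmetry]; apply (@eq_is_derive R_NormedModule); auto.
Qed.

Lemma partials_zero_const (K : R -> R -> R) :
  (forall t r, is_derive (fun s => K s r) t 0) ->
  (forall t r, is_derive (fun s => K t s) r 0) -> forall t r, K t r = K 0 0.
Proof.
  intros Ht Hr t r.
  rewrite (derive_zero_const (fun s => K s r) t 0) by auto.
  apply (derive_zero_const (fun s => K 0 s) r 0); auto.
Qed.

Lemma cos_sin_sq (x : R) : cos x ^ 2 + sin x ^ 2 = 1.
Proof. rewrite <- (sin2_cos2 x); unfold Rsqr; ring. Qed.

Lemma cosh_sinh_sq (x : R) : cosh x ^ 2 - sinh x ^ 2 = 1.
Proof.
  unfold cosh, sinh.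
  assert (H : exp x * exp (- x) = 1) by (rewrite <- exp_plus, Rplus_opp_r; apply exp_0).
  transitivity (exp x * exp (- x)); [field | exact H].
Qed.

Lemma cosh_pos (x : R) : 0 < cosh x.
Proof. unfold cosh; assert (H1 := exp_pos x); assert (H2 := exp_pos (- x)); lra. Qed.

Lemma polar_angle (x y : R) : x ^ 2 + y ^ 2 = 1 -> exists a, cos a = x /\ sin a = y.
Proof.
  intros H.
  assert (Hx : -1 <= x <= 1) by nra.
  assert (Hs : sqrt (1 - x²) = Rabs y).
  { replace (1 - x²) with (y²) by (unfold Rsqr; lra). apply sqrt_Rsqr_abs. }
  destruct (Rle_dec 0 y) as [Hy | Hy].
  - exists (acos x); rewrite cos_acos, sin_acos, Hs, Rabs_right by (auto; lra); auto.
  - exists (- acos x); rewrite cos_neg, sin_neg, cos_acos, sin_acos, Hs, Rabs_left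
      by (auto; lra); split; [reflexivity | ring].
Qed.

Lemma hyperbolic_angle (rho sg : R) :
  0 < rho -> rho ^ 2 - sg ^ 2 = 1 -> exists b, cosh b = rho /\ sinh b = sg.
Proof.
  intros Hrho H; exists (arcsinh sg); rewrite sinh_arcsinh; split; [|reflexivity].
  assert (Hc := cosh_sinh_sq (arcsinh sg)); assert (Hp := cosh_pos (arcsinh sg)).
  rewrite sinh_arcsinh in Hc; nra.
Qed.

Lemma lorentz_polar (u v p q : R) :
  u ^ 2 + v ^ 2 - p ^ 2 - q ^ 2 = 1 -> p * v = q * u ->
  exists a b, u = cosh b * cos a /\ v = cosh b * sin a /\
              p = sinh b * cos a /\ q = sinh b * sin a.
Proof.
  intros Hn Hpar.
  set (rho := sqrt (u ^ 2 + v ^ 2)).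
  assert (Hrr : rho * rho = u ^ 2 + v ^ 2) by (apply sqrt_sqrt; nra).
  assert (Hrho : 0 < rho) by (apply sqrt_lt_R0; nra).
  set (sg := (u * p + v * q) / rho).
  destruct (polar_angle (u / rho) (v / rho)) as (a & Hc & Hs).
  { replace ((u / rho) ^ 2 + (v / rho) ^ 2) with ((u ^ 2 + v ^ 2) / (rho * rho))
      by (field; lra). rewrite Hrr; field; nra. }
  (* (p, q) = sg (cos a, sin a) because (p, q) is parallel to (u, v) *)
  assert (Hp : p = sg * cos a).
  { rewrite Hc; unfold sg; apply (Rmult_eq_reg_r (rho * rho)); [|nra].
    rewrite Hrr at 1; transitivity ((u * p + v * q) * u); [| field; lra].
    transitivity (p * u ^ 2 + v * (p * v)); [ring | rewrite Hpar; ring]. }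
  assert (Hq : q = sg * sin a).
  { rewrite Hs; unfold sg; apply (Rmult_eq_reg_r (rho * rho)); [|nra].
    rewrite Hrr at 1; transitivity ((u * p + v * q) * v); [| field; lra].
    transitivity (q * v ^ 2 + u * (q * u)); [ring | rewrite <- Hpar; ring]. }
  destruct (hyperbolic_angle rho sg Hrho) as (b & Hch & Hsh).
  { assert (Hcs := cos_sin_sq a).
    replace (sg ^ 2) with (p ^ 2 + q ^ 2)
      by (rewrite Hp, Hq; transitivity (sg ^ 2 * (cos a ^ 2 + sin a ^ 2));
          [ring | rewrite Hcs; ring]).
    replace (rho ^ 2) with (u ^ 2 + v ^ 2) by (rewrite <- Hrr; ring); lra. }
  exists a, b; rewrite Hch, Hsh; repeat split; try assumption;
    [rewrite Hc | rewrite Hs]; field; lra.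
Qed.

(* Coordinates of (U, V, P, Q) after undoing the boost of rapidity b and the
   rotation by the angle a: the inverse of the transformation above. *)
Definition untwist (k : nat) (a b U V P Q : R) : R :=
  let X1 := cosh b * U - sinh b * P in let X2 := cosh b * V - sinh b * Q in
  let Y1 := cosh b * P - sinh b * U in let Y2 := cosh b * Q - sinh b * V in
  match k with
  | 1%nat => cos a * X1 + sin a * X2
  | 2%nat => cos a * X2 - sin a * X1
  | 3%nat => cos a * Y1 + sin a * Y2
  | _ => cos a * Y2 - sin a * Y1
  end.

Lemma untwist_inverse (a b U V P Q : R) :
  let K k := untwist k a b U V P Q in
  U = cosh b * (cos a * K 1%nat - sin a * K 2%nat)
      + sinh b * (cos a * K 3%nat - sin a * K 4%nat) /\
  V = cosh b * (sin a * K 1%nat + cos a * K 2%nat)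
      + sinh b * (sin a * K 3%nat + cos a * K 4%nat) /\
  P = sinh b * (cos a * K 1%nat - sin a * K 2%nat)
      + cosh b * (cos a * K 3%nat - sin a * K 4%nat) /\
  Q = sinh b * (sin a * K 1%nat + cos a * K 2%nat)
      + cosh b * (sin a * K 3%nat + cos a * K 4%nat).
Proof.
  intros K; unfold K, untwist.
  assert (E : forall x, x = x * ((cos a ^ 2 + sin a ^ 2) * (cosh b ^ 2 - sinh b ^ 2)))
    by (intros; rewrite cos_sin_sq, cosh_sinh_sq; ring).
  repeat split; rewrite E at 1; ring.
Qed.

Lemma untwist_unit_iff (a b U V P Q : R) :
  (untwist 1 a b U V P Q = 1 /\ untwist 2 a b U V P Q = 0 /\
   untwist 3 a b U V P Q = 0 /\ untwist 4 a b U V P Q = 0) <->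
  (U = cosh b * cos a /\ V = cosh b * sin a /\ P = sinh b * cos a /\ Q = sinh b * sin a).
Proof.
  split.
  - intros (K1 & K2 & K3 & K4).
    destruct (untwist_inverse a b U V P Q) as (EU & EV & EP & EQ); cbv beta in *.
    rewrite K1, K2, K3, K4 in *; repeat split;
      [rewrite EU | rewrite EV | rewrite EP | rewrite EQ]; ring.
  - intros (-> & -> & -> & ->); unfold untwist; repeat split; try ring.
    transitivity ((cos a ^ 2 + sin a ^ 2) * (cosh b ^ 2 - sinh b ^ 2));
      [ring | rewrite cos_sin_sq, cosh_sinh_sq; ring].
Qed.

(* Automation for the explicit computations below: nonvanishing of the metric
   functions, differentiability side conditions from smoothness, and expansion
   of derivatives of explicit expressions by Coquelicot's [auto_derive]; the
   derivatives of the unknown functions themselves are left as atoms. *)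
Ltac nonzero :=
  repeat match goal with
   | |- - _ <> 0 => apply Ropp_neq_0_compat
   | |- _ * _ <> 0 => apply Rmult_integral_contrapositive_currified
   | |- _ ^ _ <> 0 => apply pow_nonzero end;
  first [ match goal with H : forall t r : R, ?A t r <> 0 |- ?A _ _ <> 0 => apply H end
        | assumption | lra ].

Ltac derivable :=
  match goal with
  | |- True => exact I
  | |- ex_derive (fun s => ?F s ?r) ?t => exact (smooth2_ex_dt F t r ltac:(assumption))
  | |- ex_derive (fun s => ?F ?t s) ?r => exact (smooth2_ex_dr F t r ltac:(assumption))
  | |- _ => nonzero
  end.

Ltac expand_derivatives :=
  repeat match goal with |- context [Derive ?f ?x] =>
    lazymatch f with
    | (fun s => ?F s ?r) => fail
    | (fun s => ?F ?r s) => fail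
    | _ => erewrite (is_derive_unique f x);
           [ | auto_derive; [ repeat split; derivable | reflexivity ] ]
    end end.

(* The structure equations of the connection: closedness of the two one-forms
   A1 W1 dt + A2 W2 dr and A1 W5 dt + A2 W6 dr (solved for dr W1 and dr W5),
   transport of (W3, W4, W7, W8) along t and r, and the two algebraic
   constraints on A3 (W3, W4, W7, W8). *)
Record structure_eqs (A1 A2 A3 W1 W2 W3 W4 W5 W6 W7 W8 : R -> R -> R) : Prop := {
  closed_chi : forall t r,
    dr W1 t r = (dt A2 t r * W2 t r + A2 t r * dt W2 t r - dr A1 t r * W1 t r) / A1 t r;
  closed_psi : forall t r,
    dr W5 t r = (dt A2 t r * W6 t r + A2 t r * dt W6 t r - dr A1 t r * W5 t r) / A1 t r;
  transport_W3_t : forall t r,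
    dt W3 t r = A1 t r * (W1 t r * W4 t r - W5 t r * W7 t r) - dt A3 t r * W3 t r / A3 t r;
  transport_W4_t : forall t r,
    dt W4 t r = - A1 t r * (W1 t r * W3 t r + W5 t r * W8 t r) - dt A3 t r * W4 t r / A3 t r;
  transport_W7_t : forall t r,
    dt W7 t r = A1 t r * (W1 t r * W8 t r - W5 t r * W3 t r) - dt A3 t r * W7 t r / A3 t r;
  transport_W8_t : forall t r,
    dt W8 t r = - A1 t r * (W1 t r * W7 t r + W5 t r * W4 t r) - dt A3 t r * W8 t r / A3 t r;
  transport_W3_r : forall t r,
    dr W3 t r = A2 t r * (W2 t r * W4 t r - W6 t r * W7 t r) - dr A3 t r * W3 t r / A3 t r;
  transport_W4_r : forall t r,
    dr W4 t r = - A2 t r * (W2 t r * W3 t r + W6 t r * W8 t r) - dr A3 t r * W4 t r / A3 t r;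
  transport_W7_r : forall t r,
    dr W7 t r = A2 t r * (W2 t r * W8 t r - W6 t r * W3 t r) - dr A3 t r * W7 t r / A3 t r;
  transport_W8_r : forall t r,
    dr W8 t r = - A2 t r * (W2 t r * W7 t r + W6 t r * W4 t r) - dr A3 t r * W8 t r / A3 t r;
  hyperbolic_norm : forall t r,
    A3 t r ^ 2 * (W3 t r ^ 2 + W4 t r ^ 2 - W7 t r ^ 2 - W8 t r ^ 2) = 1;
  alignment : forall t r, W7 t r * W4 t r = W8 t r * W3 t r }.

Lemma factor_zero (C k L Rv : R) : k <> 0 -> C = 0 -> C = k * (L - Rv) -> L = Rv.
Proof.
  intros Hk -> H; symmetry in H; apply Rmult_integral in H as [H | H]; [contradiction | lra].
Qed.

Lemma zero_of_scaled (C k X Y : R) : X = Y -> C = k * (X - Y) -> C = 0.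
Proof. intros -> ->; ring. Qed.

Section Curvature.
Variables (A1 A2 A3 W1 W2 W3 W4 W5 W6 W7 W8 : R -> R -> R).
Hypotheses (hA1 : smooth2 A1) (hA2 : smooth2 A2) (hA3 : smooth2 A3)
  (nA1 : forall t r, A1 t r <> 0) (nA2 : forall t r, A2 t r <> 0)
  (nA3 : forall t r, A3 t r <> 0)
  (hW1 : smooth2 W1) (hW2 : smooth2 W2) (hW3 : smooth2 W3) (hW4 : smooth2 W4)
  (hW5 : smooth2 W5) (hW6 : smooth2 W6) (hW7 : smooth2 W7) (hW8 : smooth2 W8).
Variables (th : R) (Hth : 0 < th < PI).

Lemma sin_th_neq_0 : sin th <> 0.
Proof. apply Rgt_not_eq, sin_gt_0; lra. Qed.

Ltac expand_curvature :=
  cbv beta iota delta [curvC om1 pd sum4 omU omL cof eta fold_right map idx];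
  expand_derivatives.

Lemma curvC_antisym (a b m n : nat) (t r ph : R) :
  curvC A1 A2 A3 W1 W2 W3 W4 W5 W6 W7 W8 a b m n t r th ph =
  - curvC A1 A2 A3 W1 W2 W3 W4 W5 W6 W7 W8 a b n m t r th ph.
Proof. cbv beta iota fix delta [curvC sum4 idx map fold_right]; ring. Qed.

(* Each structure equation L = Rv is read off from one coordinate component
   of the curvature, which equals k * (L - Rv) for an explicit nonzero k. *)
Ltac from_component Hflat a b c d k :=
  intros t r; unfold dt, dr;
  apply (factor_zero (curvC A1 A2 A3 W1 W2 W3 W4 W5 W6 W7 W8 a b c d t r th 0) (k t r));
  cbv beta;
  [nonzero | apply Hflat; simpl; tauto | expand_curvature; field; repeat split; nonzero].

Lemma structure_eqs_of_curvC_zero :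
  (forall a b c d t r ph, In a idx -> In b idx -> In c idx -> In d idx ->
     curvC A1 A2 A3 W1 W2 W3 W4 W5 W6 W7 W8 a b c d t r th ph = 0) ->
  structure_eqs A1 A2 A3 W1 W2 W3 W4 W5 W6 W7 W8.
Proof.
  pose proof sin_th_neq_0 as Hsin; intros H; constructor.
  - from_component H 3%nat 4%nat 1%nat 2%nat (fun t r : R => - A1 t r).
  - from_component H 1%nat 2%nat 1%nat 2%nat (fun t r : R => A1 t r).
  - from_component H 2%nat 3%nat 1%nat 3%nat (fun t r : R => A3 t r).
  - from_component H 2%nat 3%nat 1%nat 4%nat (fun t r : R => A3 t r * sin th).
  - from_component H 1%nat 3%nat 1%nat 3%nat (fun t r : R => - A3 t r).
  - from_component H 1%nat 3%nat 1%nat 4%nat (fun t r : R => - (A3 t r * sin th)).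
  - from_component H 2%nat 3%nat 2%nat 3%nat (fun t r : R => A3 t r).
  - from_component H 2%nat 3%nat 2%nat 4%nat (fun t r : R => A3 t r * sin th).
  - from_component H 1%nat 3%nat 2%nat 3%nat (fun t r : R => - A3 t r).
  - from_component H 1%nat 3%nat 2%nat 4%nat (fun t r : R => - (A3 t r * sin th)).
  - from_component H 3%nat 4%nat 3%nat 4%nat (fun t r : R => - sin th).
  - from_component H 1%nat 2%nat 3%nat 4%nat (fun t r : R => 2 * A3 t r ^ 2 * sin th).
Qed.

(* Conversely, the structure equations annihilate every coordinate component
   of the curvature: substitute the derivatives of the W's, and use the two
   algebraic constraints for the components in the (theta, phi) plane. *)
Lemma curvC_zero_of_structure_eqs :
  structure_eqs A1 A2 A3 W1 W2 W3 W4 W5 W6 W7 W8 ->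
  forall a b m n t r ph, In a idx -> In b idx -> In m idx -> In n idx ->
  curvC A1 A2 A3 W1 W2 W3 W4 W5 W6 W7 W8 a b m n t r th ph = 0.
Proof.
  intros [e1 e5 e3t e4t e7t e8t e3r e4r e7r e8r hn al] a b m n t r ph Ha Hb Hm Hn.
  pose proof sin_th_neq_0 as Hsin; unfold dt, dr in *.
  assert (Hlt : forall m n, In m idx -> In n idx -> (m < n)%nat ->
            curvC A1 A2 A3 W1 W2 W3 W4 W5 W6 W7 W8 a b m n t r th ph = 0).
  { clear m n Hm Hn; intros m n Hm Hn Hmn; simpl in Ha, Hb, Hm, Hn.
    destruct Ha as [<-|[<-|[<-|[<-|[]]]]]; destruct Hb as [<-|[<-|[<-|[<-|[]]]]];
    destruct Hm as [<-|[<-|[<-|[<-|[]]]]]; destruct Hn as [<-|[<-|[<-|[<-|[]]]]];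
    try (exfalso; lia); expand_curvature;
    rewrite ?e1, ?e5, ?e3t, ?e4t, ?e7t, ?e8t, ?e3r, ?e4r, ?e7r, ?e8r;
    first [ field; repeat split; nonzero
          | apply (zero_of_scaled _ (- sin th) _ _ (hn t r)); field; repeat split; nonzero
          | apply (zero_of_scaled _ (sin th) _ _ (hn t r)); field; repeat split; nonzero
          | apply (zero_of_scaled _ (2 * A3 t r ^ 2 * sin th) _ _ (al t r));
              field; repeat split; nonzero
          | apply (zero_of_scaled _ (- (2 * A3 t r ^ 2 * sin th)) _ _ (al t r));
              field; repeat split; nonzero ]. }
  destruct (Nat.lt_total m n) as [Hmn | [<- | Hmn]]; [now apply Hlt | |].
  - assert (E := curvC_antisym a b m m t r ph); lra.
  - rewrite curvC_antisym, (Hlt n m); auto; ring.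
Qed.

(* The frame is diagonal in the coordinates, so frame and coordinate
   components of the curvature differ by nonzero factors. *)
Lemma curv_diagonal (a b c d : nat) (t r ph : R) : In c idx -> In d idx ->
  curv A1 A2 A3 W1 W2 W3 W4 W5 W6 W7 W8 a b c d t r th ph =
  fr A1 A2 A3 c c t r th ph * fr A1 A2 A3 d d t r th ph *
  curvC A1 A2 A3 W1 W2 W3 W4 W5 W6 W7 W8 a b c d t r th ph.
Proof.
  simpl; intros Hc Hd.
  destruct Hc as [<-|[<-|[<-|[<-|[]]]]]; destruct Hd as [<-|[<-|[<-|[<-|[]]]]];
    unfold curv; cbv beta iota fix delta [sum4 idx map fold_right fr]; ring.
Qed.

Lemma fr_neq_0 (c : nat) (t r ph : R) : In c idx -> fr A1 A2 A3 c c t r th ph <> 0.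
Proof.
  pose proof sin_th_neq_0 as Hsin; simpl; intros Hc;
    destruct Hc as [<-|[<-|[<-|[<-|[]]]]]; unfold fr; apply Rinv_neq_0_compat; nonzero.
Qed.

Lemma curvC_zero_of_flat : flat A1 A2 A3 W1 W2 W3 W4 W5 W6 W7 W8 ->
  forall a b c d t r ph, In a idx -> In b idx -> In c idx -> In d idx ->
  curvC A1 A2 A3 W1 W2 W3 W4 W5 W6 W7 W8 a b c d t r th ph = 0.
Proof.
  intros Hf a b c d t r ph Ha Hb Hc Hd.
  assert (H := Hf a b c d Ha Hb Hc Hd t r th ph Hth).
  rewrite curv_diagonal in H by auto.
  apply Rmult_integral in H as [H | H]; [exfalso | exact H].
  apply Rmult_integral in H as [H | H]; revert H; now apply fr_neq_0.
Qed.
End Curvature.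

Theorem flat_iff_structure_eqs (A1 A2 A3 W1 W2 W3 W4 W5 W6 W7 W8 : R -> R -> R) :
  smooth2 A1 -> smooth2 A2 -> smooth2 A3 ->
  (forall t r, A1 t r <> 0) -> (forall t r, A2 t r <> 0) -> (forall t r, A3 t r <> 0) ->
  smooth2 W1 -> smooth2 W2 -> smooth2 W3 -> smooth2 W4 ->
  smooth2 W5 -> smooth2 W6 -> smooth2 W7 -> smooth2 W8 ->
  flat A1 A2 A3 W1 W2 W3 W4 W5 W6 W7 W8 <-> structure_eqs A1 A2 A3 W1 W2 W3 W4 W5 W6 W7 W8.
Proof.
  intros hA1 hA2 hA3 nA1 nA2 nA3 hW1 hW2 hW3 hW4 hW5 hW6 hW7 hW8.
  assert (Hpi2 : 0 < PI / 2 < PI) by (assert (H := PI_RGT_0); lra).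
  split.
  - intros Hf; apply structure_eqs_of_curvC_zero with (th := PI / 2); auto.
    now apply curvC_zero_of_flat.
  - intros S a b c d Ha Hb Hc Hd t r th ph Hth.
    rewrite curv_diagonal by auto.
    rewrite curvC_zero_of_structure_eqs; auto; ring.
Qed.

Definition parametrized_by (A1 A2 A3 W1 W2 W3 W4 W5 W6 W7 W8 chi psi : R -> R -> R) : Prop :=
  forall t r : R,
    W1 t r = - dt chi t r / A1 t r /\
    W2 t r = - dr chi t r / A2 t r /\
    W3 t r = cosh (psi t r) * cos (chi t r) / A3 t r /\
    W4 t r = cosh (psi t r) * sin (chi t r) / A3 t r /\
    W5 t r = - dt psi t r / A1 t r /\
    W6 t r = - dr psi t r / A2 t r /\
    W7 t r = sinh (psi t r) * cos (chi t r) / A3 t r /\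
    W8 t r = sinh (psi t r) * sin (chi t r) / A3 t r.

Lemma fun2_ext (f g : R -> R -> R) : (forall t r, f t r = g t r) -> f = g.
Proof. intros H; do 2 (apply functional_extensionality; intro); apply H. Qed.

(* A parametrized connection satisfies the structure equations: differentiate
   the explicit formulas; the closedness equations are the symmetry of the
   mixed partials of chi and psi. *)
Lemma structure_eqs_of_parametrization
  (A1 A2 A3 W1 W2 W3 W4 W5 W6 W7 W8 chi psi : R -> R -> R) :
  smooth2 A1 -> smooth2 A2 -> smooth2 A3 ->
  (forall t r, A1 t r <> 0) -> (forall t r, A2 t r <> 0) -> (forall t r, A3 t r <> 0) ->
  smooth2 chi -> smooth2 psi ->
  parametrized_by A1 A2 A3 W1 W2 W3 W4 W5 W6 W7 W8 chi psi ->
  structure_eqs A1 A2 A3 W1 W2 W3 W4 W5 W6 W7 W8.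
Proof.
  intros hA1 hA2 hA3 nA1 nA2 nA3 hchi hpsi HW.
  assert (E1 : W1 = fun t r => - dt chi t r / A1 t r) by (apply fun2_ext, HW).
  assert (E2 : W2 = fun t r => - dr chi t r / A2 t r) by (apply fun2_ext, HW).
  assert (E3 : W3 = fun t r => cosh (psi t r) * cos (chi t r) / A3 t r)
    by (apply fun2_ext, HW).
  assert (E4 : W4 = fun t r => cosh (psi t r) * sin (chi t r) / A3 t r)
    by (apply fun2_ext, HW).
  assert (E5 : W5 = fun t r => - dt psi t r / A1 t r) by (apply fun2_ext, HW).
  assert (E6 : W6 = fun t r => - dr psi t r / A2 t r) by (apply fun2_ext, HW).
  assert (E7 : W7 = fun t r => sinh (psi t r) * cos (chi t r) / A3 t r)
    by (apply fun2_ext, HW).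
  assert (E8 : W8 = fun t r => sinh (psi t r) * sin (chi t r) / A3 t r)
    by (apply fun2_ext, HW).
  subst W1 W2 W3 W4 W5 W6 W7 W8; clear HW.
  assert (hcht := smooth2_dt chi hchi); assert (hchr := smooth2_dr chi hchi).
  assert (hpst := smooth2_dt psi hpsi); assert (hpsr := smooth2_dr psi hpsi).
  constructor; intros t r;
    [pose proof (smooth2_schwarz chi t r hchi) as Sch
    |pose proof (smooth2_schwarz psi t r hpsi) as Sch | .. | |].
  (* the partials of chi and psi are kept opaque while differentiating, so
     that their own derivatives appear as atoms matched by [Sch] *)
  1-10: set (cht := dt chi) in *; set (chr := dr chi) in *;
        set (pst := dt psi) in *; set (psr := dr psi) in *;
        unfold dt, dr in *; unfold cosh, sinh; expand_derivatives;
        try rewrite Sch; subst cht chr pst psr; unfold dt, dr;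
        field; repeat split; nonzero.
  - transitivity ((cosh (psi t r) ^ 2 - sinh (psi t r) ^ 2)
                   * (cos (chi t r) ^ 2 + sin (chi t r) ^ 2));
      [field; nonzero | rewrite cosh_sinh_sq, cos_sin_sq; ring].
  - field; nonzero.
Qed.

Section Solving.
Variables (A1 A2 A3 W1 W2 W3 W4 W5 W6 W7 W8 : R -> R -> R).
Hypotheses (hA1 : smooth2 A1) (hA2 : smooth2 A2) (hA3 : smooth2 A3)
  (nA1 : forall t r, A1 t r <> 0) (nA2 : forall t r, A2 t r <> 0)
  (nA3 : forall t r, A3 t r <> 0)
  (hW1 : smooth2 W1) (hW2 : smooth2 W2) (hW3 : smooth2 W3) (hW4 : smooth2 W4)
  (hW5 : smooth2 W5) (hW6 : smooth2 W6) (hW7 : smooth2 W7) (hW8 : smooth2 W8).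
Hypothesis S : structure_eqs A1 A2 A3 W1 W2 W3 W4 W5 W6 W7 W8.

Lemma closed_form_chi (t r : R) :
  dr (fun t r => - (A1 t r * W1 t r)) t r = dt (fun t r => - (A2 t r * W2 t r)) t r.
Proof.
  assert (E := closed_chi _ _ _ _ _ _ _ _ _ _ _ S t r).
  unfold dt, dr in *; expand_derivatives; rewrite E; field; nonzero.
Qed.

Lemma closed_form_psi (t r : R) :
  dr (fun t r => - (A1 t r * W5 t r)) t r = dt (fun t r => - (A2 t r * W6 t r)) t r.
Proof.
  assert (E := closed_psi _ _ _ _ _ _ _ _ _ _ _ S t r).
  unfold dt, dr in *; expand_derivatives; rewrite E; field; nonzero.
Qed.

Variables (chi psi : R -> R -> R).
Hypotheses (hchi : smooth2 chi) (hpsi : smooth2 psi)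
  (Dchi : forall t r, is_derive (fun s => chi s r) t (- (A1 t r * W1 t r)) /\
                      is_derive (fun s => chi t s) r (- (A2 t r * W2 t r)))
  (Dpsi : forall t r, is_derive (fun s => psi s r) t (- (A1 t r * W5 t r)) /\
                      is_derive (fun s => psi t s) r (- (A2 t r * W6 t r))).

(* With chi and psi potentials of the closed forms, the transport equations
   say exactly that the untwisted coordinates of A3 (W3, W4, W7, W8) are
   constant. *)
Lemma untwisted_const (k : nat) (t r : R) :
  untwist k (chi t r) (psi t r) (A3 t r * W3 t r) (A3 t r * W4 t r)
    (A3 t r * W7 t r) (A3 t r * W8 t r) =
  untwist k (chi 0 0) (psi 0 0) (A3 0 0 * W3 0 0) (A3 0 0 * W4 0 0)
    (A3 0 0 * W7 0 0) (A3 0 0 * W8 0 0).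
Proof.
  destruct S as [_ _ e3t e4t e7t e8t e3r e4r e7r e8r _ _]; unfold dt, dr in *.
  assert (dct : forall t r, Derive (fun s => chi s r) t = - (A1 t r * W1 t r))
    by (intros; apply is_derive_unique, Dchi).
  assert (dcr : forall t r, Derive (fun s => chi t s) r = - (A2 t r * W2 t r))
    by (intros; apply is_derive_unique, Dchi).
  assert (dpt : forall t r, Derive (fun s => psi s r) t = - (A1 t r * W5 t r))
    by (intros; apply is_derive_unique, Dpsi).
  assert (dpr : forall t r, Derive (fun s => psi t s) r = - (A2 t r * W6 t r))
    by (intros; apply is_derive_unique, Dpsi).
  revert t r; apply (partials_zero_const (fun t r => untwist k (chi t r) (psi t r)
    (A3 t r * W3 t r) (A3 t r * W4 t r) (A3 t r * W7 t r) (A3 t r * W8 t r)));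
    intros t r; destruct k as [|[|[|[|k]]]]; unfold untwist, cosh, sinh; cbv zeta;
    auto_derive; try (repeat split; derivable);
    rewrite ?dct, ?dcr, ?dpt, ?dpr, ?e3t, ?e4t, ?e7t, ?e8t, ?e3r, ?e4r, ?e7r, ?e8r;
    field; nonzero.
Qed.
End Solving.

(* Integration of the structure equations: the potentials chi and psi of the
   two closed forms, normalized at the origin by the Lorentz-polar form of
   A3 (W3, W4, W7, W8)(0, 0), parametrize the connection. *)
Lemma parametrization_of_structure_eqs (A1 A2 A3 W1 W2 W3 W4 W5 W6 W7 W8 : R -> R -> R) :
  smooth2 A1 -> smooth2 A2 -> smooth2 A3 ->
  (forall t r, A1 t r <> 0) -> (forall t r, A2 t r <> 0) -> (forall t r, A3 t r <> 0) ->
  smooth2 W1 -> smooth2 W2 -> smooth2 W3 -> smooth2 W4 ->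
  smooth2 W5 -> smooth2 W6 -> smooth2 W7 -> smooth2 W8 ->
  structure_eqs A1 A2 A3 W1 W2 W3 W4 W5 W6 W7 W8 ->
  exists chi psi, smooth2 chi /\ smooth2 psi /\
    parametrized_by A1 A2 A3 W1 W2 W3 W4 W5 W6 W7 W8 chi psi.
Proof.
  intros hA1 hA2 hA3 nA1 nA2 nA3 hW1 hW2 hW3 hW4 hW5 hW6 hW7 hW8 S.
  destruct (lorentz_polar (A3 0 0 * W3 0 0) (A3 0 0 * W4 0 0) (A3 0 0 * W7 0 0)
              (A3 0 0 * W8 0 0)) as (a0 & b0 & H0).
  { rewrite <- (hyperbolic_norm _ _ _ _ _ _ _ _ _ _ _ S 0 0); ring. }
  { transitivity (A3 0 0 * A3 0 0 * (W7 0 0 * W4 0 0));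
      [ring | rewrite (alignment _ _ _ _ _ _ _ _ _ _ _ S 0 0); ring]. }
  destruct (poincare_lemma (fun t r => - (A1 t r * W1 t r))
                           (fun t r => - (A2 t r * W2 t r)) a0)
    as (chi & hchi & chi0 & Dchi);
    [apply smooth2_opp, smooth2_mult; auto | apply smooth2_opp, smooth2_mult; auto
    | intros; apply (closed_form_chi A1 A2 A3 W1 W2 W3 W4 W5 W6 W7 W8); auto |].
  destruct (poincare_lemma (fun t r => - (A1 t r * W5 t r))
                           (fun t r => - (A2 t r * W6 t r)) b0)
    as (psi & hpsi & psi0 & Dpsi);
    [apply smooth2_opp, smooth2_mult; auto | apply smooth2_opp, smooth2_mult; auto
    | intros; apply (closed_form_psi A1 A2 A3 W1 W2 W3 W4 W5 W6 W7 W8); auto |].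
  exists chi, psi; split; [exact hchi | split; [exact hpsi |]]; intros t r.
  assert (HL : A3 t r * W3 t r = cosh (psi t r) * cos (chi t r) /\
               A3 t r * W4 t r = cosh (psi t r) * sin (chi t r) /\
               A3 t r * W7 t r = sinh (psi t r) * cos (chi t r) /\
               A3 t r * W8 t r = sinh (psi t r) * sin (chi t r)).
  { assert (HK : forall k, untwist k (chi t r) (psi t r) (A3 t r * W3 t r) (A3 t r * W4 t r)
                      (A3 t r * W7 t r) (A3 t r * W8 t r) =
                    untwist k a0 b0 (A3 0 0 * W3 0 0) (A3 0 0 * W4 0 0)
                      (A3 0 0 * W7 0 0) (A3 0 0 * W8 0 0)).
    { intros k; rewrite <- chi0, <- psi0.
      apply (untwisted_const A1 A2 A3 W1 W2 W3 W4 W5 W6 W7 W8); auto. }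
    apply untwist_unit_iff; rewrite !HK; now apply untwist_unit_iff. }
  destruct HL as (E3 & E4 & E7 & E8).
  assert (dct : dt chi t r = - (A1 t r * W1 t r)) by apply is_derive_unique, Dchi.
  assert (dcr : dr chi t r = - (A2 t r * W2 t r)) by apply is_derive_unique, Dchi.
  assert (dpt : dt psi t r = - (A1 t r * W5 t r)) by apply is_derive_unique, Dpsi.
  assert (dpr : dr psi t r = - (A2 t r * W6 t r)) by apply is_derive_unique, Dpsi.
  rewrite dct, dcr, dpt, dpr, <- E3, <- E4, <- E7, <- E8.
  repeat split; field; nonzero.
Qed.

Theorem mainTheorem7 (A1 A2 A3 W1 W2 W3 W4 W5 W6 W7 W8 : R -> R -> R)
  (hA1 : smooth2 A1) (hA2 : smooth2 A2) (hA3 : smooth2 A3)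
  (nA1 : forall t r, A1 t r <> 0) (nA2 : forall t r, A2 t r <> 0)
  (nA3 : forall t r, A3 t r <> 0)
  (hW1 : smooth2 W1) (hW2 : smooth2 W2) (hW3 : smooth2 W3) (hW4 : smooth2 W4)
  (hW5 : smooth2 W5) (hW6 : smooth2 W6) (hW7 : smooth2 W7) (hW8 : smooth2 W8) :
  flat A1 A2 A3 W1 W2 W3 W4 W5 W6 W7 W8 <->
  exists chi psi : R -> R -> R,
    smooth2 chi /\ smooth2 psi /\
    forall t r : R,
      W1 t r = - dt chi t r / A1 t r /\
      W2 t r = - dr chi t r / A2 t r /\
      W3 t r = cosh (psi t r) * cos (chi t r) / A3 t r /\
      W4 t r = cosh (psi t r) * sin (chi t r) / A3 t r /\
      W5 t r = - dt psi t r / A1 t r /\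
      W6 t r = - dr psi t r / A2 t r /\
      W7 t r = sinh (psi t r) * cos (chi t r) / A3 t r /\
      W8 t r = sinh (psi t r) * sin (chi t r) / A3 t r.
Proof.
  rewrite flat_iff_structure_eqs by assumption; split.
  -
    now apply parametrization_of_structure_eqs.
  -
    intros (chi & psi & hchi & hpsi & HW).
    now apply (structure_eqs_of_parametrization A1 A2 A3 W1 W2 W3 W4 W5 W6 W7 W8 chi psi).
Qed.
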